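(* Let $n\geq 2$ and $q=p^h>2$ with $p$ prime, and put $N=h(n-1)$. Let $B$ be a minimal blocking set with respect to lines in $PG(n,q)$. Suppose there are $p^N-p^{N-1}+1$ distinct points $R_i\in B$ such that every line through $R_i$ either meets $B$ only in $R_i$ or is entirely contained in $B$. Then $B$ is a hyperplane of $PG(n,q)$.
   Context: A blocking set with respect to lines is a set of points meeting every line. It is minimal if no proper subset is a blocking set. *)

(* Projective space PG(n,F) over a finite field F, modelled
   as the lattice of subspaces of F^(n+1) (row vectors), each subspace being
   represented by its canonical square matrix <<A>>%MS. *)
From HB Require Import structures.
From mathcomp Require Import all_boot all_order all_algebra all_field.
Set Implicit Arguments. Unset Strict Implicit. Unset Printing Implicit Defensive.
Import GRing.Theory.
Local Open Scope ring_scope.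

(* projective subspaces of (vector) dimension k of F^(n+1),
   i.e. projective dimension k-1 in PG(n,F) *)
Definition psub (F : finFieldType) (n k : nat) :=
  {A : 'M[F]_(n.+1) | (\rank A == k)%N && (<<A>>%MS == A)}.

Definition ppoint (F : finFieldType) (n : nat) := psub F n 1.
Definition pline (F : finFieldType) (n : nat) := psub F n 2.
Definition phyperplane (F : finFieldType) (n : nat) := psub F n n.

Definition pinc (F : finFieldType) (n k : nat) (P : ppoint F n) (S : psub F n k) : bool :=
  (val P <= val S)%MS.

Definition blocking (F : finFieldType) (n : nat) (B : {set ppoint F n}) : Prop :=
  forall L : pline F n, exists2 P, P \in B & pinc P L.

Definition minimal_blocking (F : finFieldType) (n : nat) (B : {set ppoint F n}) : Prop :=
  blocking B /\ forall B' : {set ppoint F n}, B' \proper B -> ~ blocking B'.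

Definition good_point (F : finFieldType) (n : nat) (B : {set ppoint F n}) (R : ppoint F n) : Prop :=
  forall L : pline F n, pinc R L ->
    (forall P, P \in B -> pinc P L -> P = R) \/ (forall P, pinc P L -> P \in B).

Definition hyperplane_points (F : finFieldType) (n : nat) (H : phyperplane F n) : {set ppoint F n} :=
  [set P | pinc P H].

(* Proof of the theorem.  Let W be the vector subspace spanned by the given
   good points R_i.  The whole argument is linear algebra over F:

   - Closure: if R is a good point of B and Q <> R a point of B, the line
     RQ is not tangent to B at R, hence lies in B.  By induction on the number of
     spanning points, every projective point of W therefore lies in B.
   - Counting: a subspace of vector dimension r contains (q^r - 1)/(q - 1)
     points.  If dim W <= n - 1 this is at most (p^N - 1)/2 (as q > 2),
     which is less than the number p^N - p^(N-1) + 1 of the R_i lying in W.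
     Hence dim W >= n, so W contains a hyperplane H, and H is contained in B.
   - Minimality: H is a blocking set (a hyperplane meets every line), so
     by minimality of B we get B = H. *)
From HB Require Import structures.
From mathcomp Require Import all_boot all_order all_algebra all_field.
From mathcomp Require Import zify.
Set Implicit Arguments. Unset Strict Implicit. Unset Printing Implicit Defensive.
Import GRing.Theory.
Local Open Scope ring_scope.

Section Subspaces.
Variables (F : finFieldType) (n : nat).
Local Notation point := (ppoint F n).

Lemma psub_rank (k : nat) (S : psub F n k) : \rank (val S) = k.
Proof. by case: S => A /= /andP[/eqP]. Qed.

Lemma psub_genmx (k : nat) (S : psub F n k) : <<val S>>%MS = val S.
Proof. by case: S => A /= /andP[_ /eqP]. Qed.

Lemma psub_of_proof (k m : nat) (A : 'M[F]_(m, n.+1)) : \rank A = k ->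
  (\rank <<A>>%MS == k) && (<<<<A>>%MS>>%MS == <<A>>%MS).
Proof. by move=> rA; rewrite genmxE rA genmx_id !eqxx. Qed.

Definition psub_of (k m : nat) (A : 'M[F]_(m, n.+1)) (rA : \rank A = k) : psub F n k :=
  exist _ <<A>>%MS (psub_of_proof rA).

Lemma psub_ofE (k m : nat) (A : 'M[F]_(m, n.+1)) (rA : \rank A = k) :
  (val (psub_of rA) :=: A)%MS.
Proof. exact: genmxE. Qed.

Lemma point_eq (P Q : point) : (val P <= val Q)%MS -> P = Q.
Proof.
move=> le; apply: val_inj.
have := (mxrank_leqif_eq le).2; rewrite !psub_rank eqxx => /esym /genmxP.
by rewrite !psub_genmx.
Qed.

Lemma rank_nz_rV (v : 'rV[F]_n.+1) : v != 0 -> \rank v = 1%N.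
Proof. by rewrite rank_rV => ->. Qed.

Definition point_of (v : 'rV[F]_n.+1) (nz : v != 0) : point := psub_of (rank_nz_rV nz).

Lemma point_of_sub v (nz : v != 0) : (v <= val (point_of nz))%MS.
Proof. by rewrite psub_ofE. Qed.

Lemma point_of_eq v (nz : v != 0) (P : point) : (v <= val P)%MS -> point_of nz = P.
Proof. by move=> le; apply: point_eq; rewrite psub_ofE. Qed.

Lemma point_nz_row (P : point) : nz_row (val P) != 0.
Proof. by rewrite nz_row_eq0 -mxrank_eq0 psub_rank. Qed.

Lemma point_of_nz_row (P : point) : point_of (point_nz_row P) = P.
Proof. exact/point_of_eq/nz_row_sub. Qed.

Lemma psub_in_subspace (k m : nat) (W : 'M[F]_(m, n.+1)) :
  (k <= \rank W)%N -> exists S : psub F n k, (val S <= W)%MS.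
Proof.
move=> kW; have rA : \rank (pid_mx k *m row_base W : 'M_(k, n.+1)) = k.
  by rewrite mxrankMfree ?row_base_free // rank_pid_mx.
by exists (psub_of rA); rewrite psub_ofE -(eq_row_base W) submxMl.
Qed.

End Subspaces.

Section Counting.
Variables (F : finFieldType) (n : nat).
Local Notation point := (ppoint F n).

Definition points_in (W : 'M[F]_n.+1) : {set point} := [set P | (val P <= W)%MS].

Lemma card_subspace (k m : nat) (A : 'M[F]_(m, k)) :
  #|[set v : 'rV[F]_k | (v <= A)%MS]| = (#|F| ^ \rank A)%N.
Proof.
have -> : [set v : 'rV_k | (v <= A)%MS] = [set u *m row_base A | u : 'rV_(\rank A)].
  apply/setP=> v; rewrite inE -(eq_row_base A); apply/idP/imsetP.
    by case/submxP=> u ->; exists u.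
  by case=> u _ ->; apply: submxMl.
rewrite card_imset ?card_mx ?mul1n //.
exact/row_free_inj/row_base_free.
Qed.

Lemma card_subspace_nz (k m : nat) (A : 'M[F]_(m, k)) :
  #|[set v : 'rV[F]_k | (v <= A)%MS && (v != 0)]| = (#|F| ^ \rank A - 1)%N.
Proof.
rewrite -card_subspace [in RHS](cardsD1 0) inE sub0mx add1n subSS subn0.
by apply: eq_card => v; rewrite !inE andbC.
Qed.

Lemma points_through_vector (W : 'M[F]_n.+1) (v : 'rV[F]_n.+1) :
  v != 0 -> (v <= W)%MS -> (\sum_(P in points_in W) (v <= val P)%MS = 1)%N.
Proof.
move=> nz vW.
have PvW : point_of nz \in points_in W by rewrite inE psub_ofE.
rewrite (bigD1 _ PvW) /= (point_of_sub nz) big1 // => P /andP[_ neP].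
case vP: (v <= val P)%MS => //.
by rewrite (point_of_eq nz vP) eqxx in neP.
Qed.

(* Double counting the pairs (v, P) with v a nonzero vector on the point P:
   a subspace of dimension r contains (q^r - 1)/(q - 1) points. *)
Lemma card_points_in (W : 'M[F]_n.+1) :
  (#|F| ^ \rank W - 1 = #|points_in W| * (#|F| - 1))%N.
Proof.
rewrite -card_subspace_nz -sum1_card.
transitivity (\sum_(v in [set v : 'rV[F]_n.+1 | (v <= W)%MS && (v != 0%R)])
                \sum_(P in points_in W) ((v <= val P)%MS : nat))%N.
  by apply: eq_bigr => v; rewrite inE => /andP[vW nz]; rewrite points_through_vector.
rewrite exchange_big /= -sum_nat_const; apply: eq_bigr => P; rewrite inE => PW.
have := card_subspace_nz (val P); rewrite psub_rank expn1 => <-.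
rewrite -sum1_card big_mkcond [RHS]big_mkcond /=; apply: eq_bigr => v _; rewrite !inE.
case vP: (v <= val P)%MS; rewrite ?(submx_trans vP PW) //=.
by case: ifP.
Qed.

End Counting.

Section Geometry.
Variables (F : finFieldType) (n : nat).
Local Notation point := (ppoint F n).

(* Two distinct points span a line: their intersection contains no point. *)
Lemma rank_two_points (R Q : point) : R != Q -> \rank (val R + val Q)%MS = 2%N.
Proof.
move=> neq; have := mxrank_sum_cap (val R) (val Q); rewrite !psub_rank.
case r0: (\rank (val R :&: val Q))%MS => [|k]; first by rewrite addn0.
have [X XRQ] : exists X : point, (val X <= val R :&: val Q)%MS.
  by apply: psub_in_subspace; rewrite r0.
have eXR := point_eq (submx_trans XRQ (capmxSl _ _)).
have eXQ := point_eq (submx_trans XRQ (capmxSr _ _)).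
by rewrite -eXR -eXQ eqxx in neq.
Qed.

Definition line_through (R Q : point) (neq : R != Q) : pline F n :=
  psub_of (rank_two_points neq).

(* If R is a good point of B and Q a point of B, every point of the span of
   R and Q is in B: for Q <> R the line RQ is not tangent at R. *)
Lemma good_point_line (B : {set point}) (R Q : point) :
  good_point B R -> R \in B -> Q \in B ->
  forall P : point, (val P <= val R + val Q)%MS -> P \in B.
Proof.
move=> Rgood RB QB P PRQ; have [eRQ|neq] := eqVneq R Q.
  by move: PRQ; rewrite -eRQ (addsmx_idPl (submx_refl _)) => /point_eq ->.
have RL : pinc R (line_through neq) by rewrite /pinc psub_ofE addsmxSl.
have QL : pinc Q (line_through neq) by rewrite /pinc psub_ofE addsmxSr.
have [tangent|inB] := Rgood _ RL.
  by have := tangent Q QB QL; move/eqP; rewrite eq_sym (negPf neq).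
by apply: inB; rewrite /pinc psub_ofE.
Qed.

Lemma span_good_points (B G : {set point}) :
  G \subset B -> (forall R, R \in G -> good_point B R) ->
  forall P : point, (val P <= \sum_(R in G) val R)%MS -> P \in B.
Proof.
move=> GB Ggood P PG; rewrite -(point_of_nz_row P).
move: (point_nz_row P) (submx_trans (nz_row_sub (val P)) PG).
elim/big_rec: _ (nz_row (val P)) => [v nz|R A RG IHA v nz].
  by rewrite submx0 (negPf nz).
case/sub_addsmxP=> [[u a]] /= ev; have RB := subsetP GB R RG.
have [a0 | anz] := eqVneq (a *m A) 0.
  by rewrite (@point_of_eq _ _ _ nz R) // ev a0 addr0 submxMl.
apply: (good_point_line (Ggood R RG) RB (IHA _ anz (submxMl a A))).
by rewrite psub_ofE ev addmx_sub_adds ?submxMl ?point_of_sub.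
Qed.

Lemma hyperplane_blocking (H : phyperplane F n) : blocking (hyperplane_points H).
Proof.
move=> L; have := mxrank_sum_cap (val H) (val L).
rewrite !psub_rank; have := rank_leq_col (val H + val L)%MS => le sum.
have [X XHL] : exists X : point, (val X <= val H :&: val L)%MS.
  by apply: psub_in_subspace; lia.
exists X; last exact: submx_trans XHL (capmxSr _ _).
by rewrite inE /pinc (submx_trans XHL (capmxSl _ _)).
Qed.

Lemma minimal_blocking_sub (B B' : {set point}) :
  minimal_blocking B -> blocking B' -> B' \subset B -> B' = B.
Proof.
move=> [_ Bmin] B'bl B'B; apply/eqP; apply: contraT => neq.
by case: (Bmin B'); rewrite ?properEneq ?neq.
Qed.

End Geometry.

(* The counting inequality: a subspace with q^r <= p^N vectors (q > 2)
   contains at most (p^N - 1)/2 points, fewer than p^N - p^(N-1) + 1. *)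
Lemma few_points_bound (p q r N y : nat) :
  (1 < p)%N -> (2 < q)%N -> (0 < N)%N -> (q ^ r <= p ^ N)%N ->
  (q ^ r - 1 = y * (q - 1))%N -> (y < p ^ N - p ^ (N - 1) + 1)%N.
Proof.
move=> p_gt1 q_gt2 N_gt0 qr_le count.
have pN : (p ^ N = p * p ^ (N - 1))%N by rewrite -expnS subn1 prednK.
have y2 : (y * 2 <= y * (q - 1))%N by apply: leq_mul => //; lia.
have x2 : (p ^ (N - 1) * 2 <= p * p ^ (N - 1))%N by rewrite mulnC leq_mul2r p_gt1 orbT.
lia.
Qed.

Theorem lemmaN2 (F : finFieldType) (p h n : nat) :
  prime p -> #|F| = (p ^ h)%N -> (2 < #|F|)%N -> (2 <= n)%N ->
  forall B : {set ppoint F n}, minimal_blocking B ->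
  (exists Rs : {set ppoint F n},
      [/\ #|Rs| = (p ^ (h * (n - 1)) - p ^ (h * (n - 1) - 1) + 1)%N,
          Rs \subset B &
          forall R, R \in Rs -> good_point B R]) ->
  exists H : phyperplane F n, B = hyperplane_points H.
Proof.
move=> p_prime qE q_gt2 n_ge2 B Bmin [Rs [cardRs RsB Rsgood]].
set W := (\sum_(R in Rs) val R)%MS.
have WB : points_in W \subset B.
  by apply/subsetP => P; rewrite inE; apply: span_good_points.
have RsW : Rs \subset points_in W.
  by apply/subsetP => R RRs; rewrite inE (sumsmx_sup R).
have rankW : (n <= \rank W)%N.
  rewrite leqNgt; apply/negP => small.
  have h_gt0 : (0 < h)%N by rewrite lt0n; apply: contraTneq q_gt2 => h0; rewrite qE h0.
  have qW : (#|F| ^ \rank W <= p ^ (h * (n - 1)))%N.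
    by rewrite expnM -qE leq_pexp2l //; lia.
  have N_gt0 : (0 < h * (n - 1))%N by rewrite muln_gt0 h_gt0 subn_gt0.
  have := few_points_bound (prime_gt1 p_prime) q_gt2 N_gt0 qW (card_points_in W).
  by rewrite -cardRs ltnNge (subset_leq_card RsW).
have [H HW] := psub_in_subspace rankW.
exists H; apply/esym/minimal_blocking_sub => //; first exact: hyperplane_blocking.
by apply: subset_trans WB; apply/subsetP => P; rewrite !inE => /submx_trans; apply.
Qed.
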